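(* Let $D \in \mathbb{N}$, let $X, Y \subset \mathbb{R}^D$ be finite sets, and let $\mathcal{N}$ be a family of functions $\mathbb{R}^D \to \mathbb{R}$ having the universal approximation property (UAP). If $$\sum_{x \in X} \tau(x) = \sum_{y \in Y} \tau(y) \quad \text{for every } \tau \in \mathcal{N},$$ then $X = Y$.
   Context: A family $\mathcal{N}$ of functions $\mathbb{R}^D \to \mathbb{R}$ has the universal approximation property (UAP) if for every compact set $K \subset \mathbb{R}^D$, every continuous function $f : K \to \mathbb{R}$ and every $\varepsilon > 0$ there is a function $g \in \mathrm{span}(\mathcal{N})$ (a finite linear combination of elements of $\mathcal{N}$) with $\sup_{x \in K} |f(x) - g(x)| \le \varepsilon$. For a function $\tau$ and a finite set $X$, the paper writes $\tau(X)$ for the aggregated value $\sum_{x \in X} \tau(x)$. *)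

From HB Require Import structures.
From mathcomp Require Import all_boot all_order all_algebra.
From mathcomp Require Import all_classical all_reals all_analysis.
From mathcomp Require Import finmap.
From mathcomp Require Import Rstruct Rstruct_topology.
Set Implicit Arguments. Unset Strict Implicit. Unset Printing Implicit Defensive.
Import Order.TTheory GRing.Theory Num.Theory.
Import numFieldNormedType.Exports.
Local Open Scope classical_set_scope.
Local Open Scope ring_scope.

Notation RD D := 'rV[Rdefinitions.R]_D.

Definition in_span (D : nat) (N : set (RD D -> Rdefinitions.R))
    (g : RD D -> Rdefinitions.R) : Prop :=
  exists (n : nat) (c : 'I_n -> Rdefinitions.R) (f : 'I_n -> (RD D -> Rdefinitions.R)),
    (forall i, N (f i)) /\ (forall x, g x = \sum_(i < n) c i * f i x).

Definition UAP (D : nat) (N : set (RD D -> Rdefinitions.R)) : Prop :=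
  forall (K : set (RD D)) (f : RD D -> Rdefinitions.R) (eps : Rdefinitions.R),
    compact K -> {within K, continuous f} -> 0 < eps ->
    exists g, in_span N g /\ (forall x, K x -> `|f x - g x| <= eps).

From HB Require Import structures.
From mathcomp Require Import all_boot all_order all_algebra.
From mathcomp Require Import all_classical all_reals all_analysis.
From mathcomp Require Import finmap.
From mathcomp Require Import Rstruct Rstruct_topology.
Import Order.TTheory GRing.Theory Num.Theory.
Import numFieldNormedType.Exports.
Local Open Scope ring_scope.

(* Both sums are linear in tau, so they agree on span N; approximating on the
   finite, hence compact, set X `|` Y shows that they agree on every continuous
   function.  For z in X the continuous function
   x |-> \prod_(w in X `|` Y, w != z) |x - w| vanishes on X `|` Y except at z,
   so its sum over Y can only equal its (nonzero) sum over X if z is in Y. *)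

Lemma le0_of_forall_le_mulrn (R : numFieldType) (x : R) (n : nat) :
  (forall e, 0 < e -> x <= e *+ n) -> x <= 0.
Proof.
move=> x_le; apply/ler_addgt0Pr => e e_gt0; rewrite add0r.
have n1_gt0 : 0 < n.+1%:R :> R by rewrite ltr0Sn.
apply: le_trans (x_le _ (divr_gt0 e_gt0 n1_gt0)) _.
by rewrite -[_ *+ n]mulr_natr mulrAC ler_pdivrMr // ler_pM2l // ler_nat.
Qed.

Lemma ler_norm_sumB (R : numDomainType) (T : eqType) (s : seq T)
    (f g : T -> R) (e : R) :
  {in s, forall x, `|f x - g x| <= e} ->
  `|\sum_(x <- s) f x - \sum_(x <- s) g x| <= e *+ size s.
Proof.
move=> fg_le; rewrite -sumrB; apply: le_trans (ler_norm_sum _ _ _) _.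
rewrite -iter_addr_0 -(count_predT s) -big_const_seq.
by rewrite big_seq [leRHS]big_seq; apply: ler_sum.
Qed.

Section SeparatingProduct.
Variables (R : numFieldType) (V : normedModType R).

Lemma continuous_dist (a : V) : continuous (fun x : V => `|x - a|).
Proof.
move=> x; apply: (continuous_comp (f := fun x : V => x - a)).
  by apply: cvgB; [exact: cvg_id | exact: cvg_cst].
exact: norm_continuous.
Qed.

Lemma continuous_prod_dist (s : seq V) (P : pred V) :
  continuous (fun x : V => \prod_(w <- s | P w) `|x - w|).
Proof.
elim: s => [|a s IHs] x.
  under eq_fun do rewrite big_nil; exact: cst_continuous.
under eq_fun do rewrite big_cons.
case: (P a); last exact: IHs.
by move: (continuousM (continuous_dist a x) (IHs x)).
Qed.

Lemma fsubset_of_fsum_eq_continuous (X Y : {fset V}) :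
  (forall f : V -> R, continuous f -> \sum_(x <- X) f x = \sum_(y <- Y) f y) ->
  (X `<=` Y)%fset.
Proof.
move=> sumXY; apply/fsubsetP => z zX; apply/negPn/negP => zNY.
pose f x := \prod_(w <- (X `|` Y)%fset | w != z) `|x - w|.
have f_eq0 w : w \in (X `|` Y)%fset -> w != z -> f w = 0.
  move=> wXY wz; apply/eqP; rewrite prodf_seq_eq0; apply/hasP.
  by exists w; rewrite // wz subrr normr0 eqxx.
have f_neq0 : f z != 0.
  rewrite prodf_seq_neq0; apply/allP => w _; apply/implyP => wz.
  by rewrite normr_eq0 subr_eq0 eq_sym.
have := sumXY f (continuous_prod_dist _ _).
rewrite (bigD1_seq z) ?fset_uniq //= big1_seq => [|w /andP[wz wX]]; last first.
  by apply: f_eq0; rewrite ?in_fsetU ?wX.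
rewrite big1_seq => [|w /= wY]; last first.
  by apply: f_eq0; [rewrite in_fsetU wY orbT | apply: contraNneq zNY => <-].
by rewrite addr0 => /eqP; rewrite (negbTE f_neq0).
Qed.

End SeparatingProduct.

Section UniversalApproximation.
Context {D : nat} {N : set (RD D -> Rdefinitions.R)} {X Y : {fset RD D}}.
Hypothesis sumN : forall tau, N tau -> \sum_(x <- X) tau x = \sum_(y <- Y) tau y.
Hypothesis uapN : UAP N.

Lemma fsum_eq_span g : in_span N g -> \sum_(x <- X) g x = \sum_(y <- Y) g y.
Proof.
move=> [n [c [f [Nf /funext->]]]].
rewrite exchange_big [RHS]exchange_big; apply: eq_bigr => i _ /=.
by rewrite -!mulr_sumr sumN.
Qed.

Lemma fsum_eq_continuous (f : RD D -> Rdefinitions.R) : continuous f ->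
  \sum_(x <- X) f x = \sum_(y <- Y) f y.
Proof.
move=> f_cont; apply/eqP; rewrite -subr_eq0 -normr_le0.
apply: (@le0_of_forall_le_mulrn _ _ (size X + size Y)%N) => e e_gt0.
have [g [Ng fg_le]] := uapN [set` (X `|` Y)%fset]%classic f e
  (finite_compact (finite_fset _)) (continuous_subspaceT f_cont) e_gt0.
have -> : \sum_(x <- X) f x - \sum_(y <- Y) f y =
    (\sum_(x <- X) f x - \sum_(x <- X) g x)
  - (\sum_(y <- Y) f y - \sum_(y <- Y) g y).
  by rewrite (fsum_eq_span _ Ng) opprB addrA subrK.
rewrite mulrnDr; apply: le_trans (ler_normB _ _) (lerD _ _);
  by apply: ler_norm_sumB => x x_in; apply: fg_le; rewrite /= in_fsetU x_in ?orbT.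
Qed.

End UniversalApproximation.

Theorem theorem1 (D : nat) (X Y : {fset 'rV[Rdefinitions.R]_D})
    (N : set ('rV[Rdefinitions.R]_D -> Rdefinitions.R)) :
  UAP N ->
  (forall tau, N tau -> \sum_(x <- X) tau x = \sum_(y <- Y) tau y) ->
  X = Y.
Proof.
move=> uap sumN; have sumXY := fsum_eq_continuous sumN uap.
apply/eqP; rewrite eqEfsubset; apply/andP.
by split; apply: (@fsubset_of_fsum_eq_continuous _ (RD D)) => f /sumXY ->.
Qed.
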